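(* Let $K>2$, let $n_1=1$, let $n_2>1$ be an integer, and let $n_3,\dots,n_K$ be positive integers. Let $\tau$ be the time of the first emptying event and $p$ the type emptied at time $\tau$. Then for every $t$ with $\Pr[\tau=t]>0$, \[ \Pr[p=1\mid \tau=t]\ \ge\ \Pr[p=2\mid \tau=t]. \]
   Context: Initial stocks $\vec n^{(0)}=(n_1,\dots,n_K)$ of $K$ goodie types evolve as follows: at each step $t=1,2,\dots$, as long as at least two coordinates of $\vec n^{(t-1)}$ are nonzero, an index $i$ is chosen uniformly at random (independently of the past) among the indices with $n_i^{(t-1)}>0$, and $\vec n^{(t)}=\vec n^{(t-1)}-\vec e_i$ ($\vec e_i$ the $i$-th standard unit vector). The time of the first emptying event is $\tau=\min\{t : \exists i \text{ with } n_i^{(t)}=0 \text{ and } n_i^{(0)}>0\}$; exactly one type is emptied at that step, and $p$ denotes that type. *)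

From mathcomp Require Import all_boot all_order all_algebra.
Set Implicit Arguments. Unset Strict Implicit. Unset Printing Implicit Defensive.
Import Order.TTheory GRing.Theory Num.Theory.
Local Open Scope ring_scope.

Definition dec {K : nat} (n : 'I_K -> nat) (j : 'I_K) : 'I_K -> nat :=
  fun k => if k == j then (n k).-1 else n k.

Definition supp {K : nat} (n : 'I_K -> nat) : {pred 'I_K} := [pred k | (0 < n k)%N].

(* first_empty t n i = Pr[tau = t /\ p = i] for the process started at stock
   vector n (tau counts steps from this start; the types that can be emptied
   are those with positive stock in n).  At each step, as long as at least two
   coordinates are nonzero, an index j with n j > 0 is picked uniformly; if
   n j = 1 this is the first emptying event (with p = j), otherwise the process
   continues from dec n j (whose support is unchanged). *)
Fixpoint first_empty {K : nat} (t : nat) (n : 'I_K -> nat) (i : 'I_K) : rat :=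
  match t with
  | 0%N => 0
  | s.+1 =>
      if (2 <= #|supp n|)%N then
        \sum_(j in supp n)
          #|supp n|%:R^-1 *
          (if n j == 1%N then (if (s == 0%N) && (j == i) then 1 else 0)
           else first_empty s (dec n j) i)
      else 0
  end.

Definition prob_tau {K : nat} (t : nat) (n : 'I_K -> nat) : rat :=
  \sum_(i : 'I_K) first_empty t n i.

Definition cond_p {K : nat} (t : nat) (n : 'I_K -> nat) (i : 'I_K) : rat :=
  first_empty t n i / prob_tau t n.

(** Induction on [t], conditioning on the first pick [j]: if [0 < n a <= n b],
    then type [a] is at least as likely as type [b] to be the first one emptied,
    at every time.  A pick [j] of a third type keeps the stock order of [a] and
    [b].  If [n a < n b], picking [b] keeps the order, and so does picking [a]
    unless [n a = 1], in which case [a] is emptied at once.  If [n a = n b], the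
    transposition of [a] and [b] is a symmetry of the process exchanging the
    contributions of the picks [a] and [b]. *)
From mathcomp Require Import all_boot all_order all_fingroup all_algebra.
From mathcomp Require Import zify.
Set Implicit Arguments. Unset Strict Implicit. Unset Printing Implicit Defensive.
Import Order.TTheory GRing.Theory Num.Theory.
Local Open Scope ring_scope.

Definition first_empty_after {K : nat} (s : nat) (n : 'I_K -> nat) (j i : 'I_K)
    : rat :=
  if n j == 1%N then (if (s == 0%N) && (j == i) then 1 else 0)
  else first_empty s (dec n j) i.

Lemma first_empty_S K s (n : 'I_K -> nat) i :
  first_empty s.+1 n i =
  if (2 <= #|supp n|)%N then
    #|supp n|%:R^-1 * \sum_(j in supp n) first_empty_after s n j i
  else 0.
Proof. by rewrite /= mulr_sumr. Qed.

Lemma dec_eq K (n : 'I_K -> nat) j : dec n j j = (n j).-1.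
Proof. by rewrite /dec eqxx. Qed.

Lemma dec_neq K (n : 'I_K -> nat) j k : k != j -> dec n j k = n k.
Proof. by rewrite /dec => /negbTE ->. Qed.

Lemma eq_first_empty K t (n n' : 'I_K -> nat) i :
  n =1 n' -> first_empty t n i = first_empty t n' i.
Proof.
elim: t n n' => [|s IH] n n' eq_n //.
have eq_supp : supp n =i supp n' by move=> k; rewrite !inE eq_n.
rewrite !first_empty_S (eq_card eq_supp) (eq_bigl _ _ eq_supp).
case: ifP => // _; congr (_ * _); apply: eq_bigr => j _.
rewrite /first_empty_after eq_n; case: ifP => // _.
by apply: IH => k; rewrite /dec eq_n.
Qed.

Lemma first_empty_perm K t (n : 'I_K -> nat) (p : {perm 'I_K}) i :
  first_empty t (n \o p) i = first_empty t n (p i).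
Proof.
elim: t n i => [|s IH] n i //.
have card_supp : #|supp (n \o p)| = #|supp n|.
  rewrite -!sum1_card [RHS](reindex_inj (@perm_inj _ p)) /=.
  by apply: eq_bigl => k; rewrite !inE.
rewrite !first_empty_S card_supp [in RHS](reindex_inj (@perm_inj _ p)) /=.
case: ifP => // _; congr (_ * _).
apply: eq_big => [k|j _]; first by rewrite !inE.
rewrite /first_empty_after /=; case: ifP => _; first by rewrite (inj_eq perm_inj).
rewrite -IH; apply: eq_first_empty => k.
by rewrite /dec /= (inj_eq perm_inj).
Qed.

Lemma first_empty_after_tperm K s (n : 'I_K -> nat) a b i :
  n a = n b -> first_empty_after s n a i = first_empty_after s n b (tperm a b i).
Proof.
move=> eq_nab; rewrite /first_empty_after eq_nab.
case: ifP => _; first by rewrite -{1}(tpermL a b) (inj_eq perm_inj).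
rewrite -first_empty_perm; apply: eq_first_empty => k /=.
have [->|ka] := eqVneq k a; first by rewrite tpermL !dec_eq eq_nab.
move: ka; have [-> ba|kb ka] := eqVneq k b.
  by rewrite tpermR !dec_neq ?eq_nab // eq_sym.
by rewrite tpermD 1?eq_sym // !dec_neq.
Qed.

Section FirstEmptyStep.

Variables (K s : nat) (a b : 'I_K).
Hypothesis neq_ab : a != b.

Hypothesis first_empty_le_s : forall n : 'I_K -> nat,
  (0 < n a)%N -> (n a <= n b)%N -> first_empty s n b <= first_empty s n a.

Variable n : 'I_K -> nat.
Hypotheses (na_gt0 : (0 < n a)%N) (le_nab : (n a <= n b)%N).

Lemma first_empty_after_other_le j : j != a -> j != b ->
  first_empty_after s n j b <= first_empty_after s n j a.
Proof.
move=> ja jb; rewrite /first_empty_after eq_sym (negbTE ja) eq_sym (negbTE jb).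
rewrite !andbF; case: ifP => // _.
by apply: first_empty_le_s; rewrite !dec_neq // eq_sym.
Qed.

Lemma first_empty_after_pair_le :
  first_empty_after s n a b + first_empty_after s n b b
  <= first_empty_after s n a a + first_empty_after s n b a.
Proof.
have [lt_nab|] := ltnP (n a) (n b); last first.
  move=> ge_nab; have eq_nab : n a = n b by apply/eqP; rewrite eqn_leq le_nab.
  by rewrite !(first_empty_after_tperm s _ eq_nab) tpermL tpermR addrC.
have dec_ab : dec n a b = n b by rewrite dec_neq // eq_sym.
have dec_ba : dec n b a = n a by rewrite dec_neq.
apply: lerD; rewrite /first_empty_after.
- rewrite (negbTE neq_ab) eqxx andbF andbT.
  case: ifP => [_|na_neq1]; first by case: (s == 0%N).
  by apply: first_empty_le_s; rewrite dec_eq ?dec_ab; lia.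
- have -> : (n b == 1%N) = false by lia.
  by apply: first_empty_le_s; rewrite ?dec_eq dec_ba; lia.
Qed.

Lemma sum_first_empty_after_le :
  \sum_(j in supp n) first_empty_after s n j b
  <= \sum_(j in supp n) first_empty_after s n j a.
Proof.
have a_supp : a \in supp n by rewrite inE.
have b_supp : (b \in supp n) && (b != a).
  by rewrite inE eq_sym neq_ab andbT (leq_trans na_gt0).
rewrite (bigD1 a a_supp) [in leRHS](bigD1 a a_supp) /=.
rewrite (bigD1 b b_supp) [in leRHS](bigD1 b b_supp) /= !addrA.
apply: lerD; first exact: first_empty_after_pair_le.
by apply: ler_sum => j /andP[/andP[_ ja] jb]; apply: first_empty_after_other_le.
Qed.

End FirstEmptyStep.

Lemma first_empty_le_of_stock_le K t (n : 'I_K -> nat) a b :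
  (0 < n a)%N -> (n a <= n b)%N -> first_empty t n b <= first_empty t n a.
Proof.
have [-> //|neq_ab] := eqVneq a b.
elim: t n => [|s IH] n na_gt0 le_nab //.
rewrite !first_empty_S; case: ifP => // _.
apply: ler_wpM2l; first by rewrite invr_ge0 ler0n.
exact: sum_first_empty_after_le.
Qed.

Theorem lemma11 (K : nat) (hK : (2 < K)%N) (n : 'I_K -> nat) (i1 i2 : 'I_K)
  (hi1 : val i1 = 0%N) (hi2 : val i2 = 1%N)
  (hn1 : n i1 = 1%N) (hn2 : (1 < n i2)%N)
  (hpos : forall k : 'I_K, (2 <= val k)%N -> (0 < n k)%N)
  (t : nat) (ht : 0 < prob_tau t n) :
  cond_p t n i2 <= cond_p t n i1.
Proof.
rewrite /cond_p; apply: ler_wpM2r; first by rewrite invr_ge0 ltW.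
by apply: first_empty_le_of_stock_le; rewrite hn1 // ltnW.
Qed.
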